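(* Let $\epsilon>0$, $\delta\ge 0$, $\alpha\in(0,1)$, $0<\theta_0<\theta_1<1$ and $n\ge1$ be given. Observe $X\sim\mathrm{Binom}(n,\theta)$, where $\theta$ is unknown. Set $b=e^{-\epsilon}$ and $q=\frac{2\delta b}{1-b+2\delta b}$. Define $\phi^*:\mathbb{Z}\to[0,1]$ by $\phi^*_x=F_N(x-m)$, where $N\sim\mathrm{Tulap}(0,b,q)$ and $m\in\mathbb{R}$ is chosen such that $\mathbb{E}_{\theta_0}\phi^*_X=\alpha$. Then $\phi^*$ is the uniformly most powerful level-$\alpha$ test of $H_0:\theta=\theta_0$ versus $H_1:\theta=\theta_1$ among $\mathscr D^n_{\epsilon,\delta}$.
   Context: Nearest integer function: for $t\in\mathbb{R}$, $[t]$ is the integer nearest to $t$, where for $z\in\mathbb{Z}$, $[z+1/2]$ is defined to be the nearest even integer. Tulap distribution: for $m\in\mathbb{R}$, $b\in(0,1)$, $q\in[0,1)$, $N_0\sim\mathrm{Tulap}(m,b,0)$ has cdf $F_{N_0}(x)=\frac{b^{-[x-m]}}{1+b}\big(b+(x-m-[x-m]+\tfrac12)(1-b)\big)$ for $x\leq [m]$ and $F_{N_0}(x)=1-\frac{b^{[x-m]}}{1+b}\big(b+([x-m]-(x-m)+\tfrac12)(1-b)\big)$ for $x>[m]$; and $N\sim \mathrm{Tulap}(m,b,q)$ has cdf $F_N(x)=\frac{F_{N_0}(x)-q/2}{1-q}\,I\{q/2\leq F_{N_0}(x)\leq 1-q/2\}+I\{F_{N_0}(x)>1-q/2\}$. A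 (randomized) test is a function $\phi:\{0,1,\dots,n\}\to[0,1]$, $\phi_x$ being the probability of rejecting $H_0$ when $X=x$; its power at $\theta$ is $\mathbb{E}_\theta\phi_X$. For $\epsilon>0,\delta\ge 0$, $\mathscr D^n_{\epsilon,\delta}$ is the set of tests $\phi$ such that for all $x\in\{0,\dots,n-1\}$: $\phi_x\le e^\epsilon\phi_{x+1}+\delta$, $\phi_{x+1}\le e^\epsilon\phi_x+\delta$, $1-\phi_x\le e^\epsilon(1-\phi_{x+1})+\delta$, $1-\phi_{x+1}\le e^\epsilon(1-\phi_x)+\delta$. A test $\phi^*\in\Phi$ is uniformly most powerful (UMP) at level $\alpha$ among $\Phi$ if $\sup_{\theta\in\Theta_0}\mathbb{E}_\theta\phi^*\le\alpha$ and for every $\phi\in\Phi$ with $\sup_{\theta\in\Theta_0}\mathbb{E}_\theta\phi\le\alpha$, $\mathbb{E}_\theta\phi^*\ge\mathbb{E}_\theta\phi$ for all $\theta$ in the alternative. *)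

From Stdlib Require Import Reals Lra ZArith.
Open Scope R_scope.

(* floor is Int_part (= up t - 1). Nearest integer, ties to the even integer. *)
Definition nearest (t : R) : Z :=
  let k := Int_part t in
  let d := t - IZR k in
  if Rlt_dec d (1/2) then k
  else if Rlt_dec (1/2) d then (k + 1)%Z
  else if Z.even k then k else (k + 1)%Z.

Definition tulap0_cdf (m b x : R) : R :=
  if Rle_dec x (IZR (nearest m)) then
    let r := IZR (nearest (x - m)) in
    Rpower b (- r) / (1 + b) * (b + (x - m - r + 1/2) * (1 - b))
  else
    let r := IZR (nearest (x - m)) in
    1 - Rpower b r / (1 + b) * (b + (r - (x - m) + 1/2) * (1 - b)).

Definition tulap_cdf (m b q x : R) : R :=
  let F0 := tulap0_cdf m b x in
  (if Rle_dec (q/2) F0 then if Rle_dec F0 (1 - q/2) then (F0 - q/2) / (1 - q) else 0 else 0)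
  + (if Rlt_dec (1 - q/2) F0 then 1 else 0).

Definition binom_pmf (n : nat) (theta : R) (x : nat) : R :=
  C n x * theta ^ x * (1 - theta) ^ (n - x).

Definition power (n : nat) (theta : R) (phi : nat -> R) : R :=
  sum_f_R0 (fun x => phi x * binom_pmf n theta x) n.

Definition is_test (n : nat) (phi : nat -> R) : Prop :=
  forall x, (x <= n)%nat -> 0 <= phi x <= 1.

Definition DP_tests (n : nat) (eps delta : R) (phi : nat -> R) : Prop :=
  is_test n phi /\
  forall x, (x < n)%nat ->
    phi x <= exp eps * phi (S x) + delta /\
    phi (S x) <= exp eps * phi x + delta /\
    1 - phi x <= exp eps * (1 - phi (S x)) + delta /\
    1 - phi (S x) <= exp eps * (1 - phi x) + delta.

Definition UMP_simple (n : nat) (Phi : (nat -> R) -> Prop) (alpha theta0 theta1 : R)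
  (phistar : nat -> R) : Prop :=
  Phi phistar /\ power n theta0 phistar <= alpha /\
  forall phi, Phi phi -> power n theta0 phi <= alpha ->
    power n theta1 phi <= power n theta1 phistar.

From Stdlib Require Import Reals Lra Lia ZArith Classical.
Open Scope R_scope.

(* Let F be the Tulap(0, b, 0) cdf. It satisfies F(t + 1) = min (F t / b) (1 - b (1 - F t)),
   and the standardization F |-> (F - q/2) / (1 - q), which together with clamping to
   [0, 1] produces the Tulap(0, b, q) cdf, conjugates these two maps into
   u |-> u / b + delta and u |-> 1 - b (1 - u - delta): the two upper bounds that
   (eps, delta)-DP puts on phi (x + 1) given phi x. So phistar is a DP test which, once
   positive, grows as fast as DP allows, and a DP test phi that is below phistar at a
   point where phistar is positive stays below it afterwards. Hence phi - phistar changes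
   sign at most once, from + to -, and as the binomial family has monotone likelihood
   ratio, E_theta0 (phi - phistar) <= 0 forces E_theta1 (phi - phistar) <= 0. *)

Definition clamp01 (w : R) : R := Rmax 0 (Rmin 1 w).

Lemma clamp01_cases w :
  (w <= 0 /\ clamp01 w = 0) \/ (0 <= w <= 1 /\ clamp01 w = w) \/ (1 <= w /\ clamp01 w = 1).
Proof.
  unfold clamp01. destruct (Rle_dec w 0) as [H0|H0]; [|destruct (Rle_dec w 1) as [H1|H1]].
  - left. rewrite Rmin_right, Rmax_left; lra.
  - right; left. rewrite Rmin_right, Rmax_right; lra.
  - right; right. rewrite Rmin_left, Rmax_right; lra.
Qed.

Section dp_next.

Variables b delta : R.
Hypothesis b_pos : 0 < b.
Hypothesis b_le1 : b <= 1.
Hypothesis delta_ge0 : 0 <= delta.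

Definition dp_next (u : R) : R :=
  Rmin 1 (Rmin (u / b + delta) (1 - b * (1 - u - delta))).

Lemma dp_next_le_compat u v : u <= v -> dp_next u <= dp_next v.
Proof.
  intros Huv.
  assert (u / b <= v / b) by (apply Rmult_le_compat_r; [left; apply Rinv_0_lt_compat|]; lra).
  assert (b * u <= b * v) by (apply Rmult_le_compat_l; lra).
  unfold dp_next. apply Rle_min_compat_l, Rmin_glb.
  - apply Rle_trans with (u / b + delta); [apply Rmin_l | lra].
  - apply Rle_trans with (1 - b * (1 - u - delta)); [apply Rmin_r | lra].
Qed.

Lemma dp_next_ge u : 0 <= u <= 1 -> u <= dp_next u.
Proof.
  intros Hu.
  assert (u <= u / b).
  { apply (Rmult_le_reg_r b); [lra|]. unfold Rdiv.
    rewrite Rmult_assoc, Rinv_l by lra. nra. }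
  unfold dp_next. apply Rmin_glb; [lra|]. apply Rmin_glb; nra.
Qed.

Lemma dp_next_ge0 u : 0 <= u -> 0 <= dp_next u.
Proof.
  intros Hu. apply Rle_trans with (dp_next 0); [|apply dp_next_le_compat; lra].
  unfold dp_next. unfold Rdiv. rewrite Rmult_0_l.
  apply Rmin_glb; [lra|]. apply Rmin_glb; nra.
Qed.

Lemma dp_next_ge1 u : 1 <= u -> dp_next u = 1.
Proof.
  intros Hu. apply Rle_antisym; [apply Rmin_l|].
  apply Rle_trans with (dp_next 1); [|apply dp_next_le_compat; lra].
  apply dp_next_ge; lra.
Qed.

Lemma clamp01_le_dp_next w : clamp01 w <= Rmax 0 (dp_next w).
Proof.
  destruct (clamp01_cases w) as [[Hw ->]|[[Hw ->]|[Hw ->]]].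
  - apply Rmax_l.
  - eapply Rle_trans; [apply dp_next_ge, Hw | apply Rmax_r].
  - rewrite dp_next_ge1 by exact Hw. apply Rmax_r.
Qed.

Lemma dp_next_le_clamp01 w : Rmax 0 (dp_next w) <= dp_next (clamp01 w).
Proof.
  destruct (clamp01_cases w) as [[Hw Hc]|[[Hw Hc]|[Hw Hc]]]; rewrite Hc;
    apply Rmax_lub; try (apply dp_next_ge0; lra).
  - apply dp_next_le_compat. exact Hw.
  - lra.
  - rewrite !dp_next_ge1 by lra. lra.
Qed.

Lemma dp_next_clamp01 w : 0 < clamp01 w -> Rmax 0 (dp_next w) = dp_next (clamp01 w).
Proof.
  destruct (clamp01_cases w) as [[Hw ->]|[[Hw ->]|[Hw ->]]]; intros Hpos; [lra| |].
  - apply Rmax_right, dp_next_ge0. lra.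
  - rewrite !dp_next_ge1 by lra. apply Rmax_right. lra.
Qed.

End dp_next.

Lemma dp_next_spec eps delta u v : v <= 1 ->
  v <= dp_next (exp (- eps)) delta u <->
  v <= exp eps * u + delta /\ 1 - u <= exp eps * (1 - v) + delta.
Proof.
  intros Hv.
  assert (He : exp eps * exp (- eps) = 1) by (rewrite <- exp_plus, Rplus_opp_r; apply exp_0).
  pose proof (exp_pos eps) as Hpos. pose proof (exp_pos (- eps)) as Hpos'.
  assert (Hscale : forall w, exp (- eps) * w <= 1 - v <-> w <= exp eps * (1 - v)).
  { intros w. split; intros Hw.
    - replace w with (exp eps * (exp (- eps) * w)) by (rewrite <- Rmult_assoc, He; ring).
      apply Rmult_le_compat_l; lra.
    - replace (1 - v) with (exp (- eps) * (exp eps * (1 - v)))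
        by (rewrite <- Rmult_assoc, (Rmult_comm (exp (- eps))), He; ring).
      apply Rmult_le_compat_l; lra. }
  unfold dp_next.
  replace (u / exp (- eps)) with (exp eps * u)
    by (unfold Rdiv; rewrite exp_Ropp, Rinv_inv; ring).
  split.
  - intros Hle. pose proof (Rle_trans _ _ _ Hle (Rmin_r _ _)) as Hmin.
    pose proof (Rle_trans _ _ _ Hmin (Rmin_l _ _)) as Hlin.
    pose proof (Rle_trans _ _ _ Hmin (Rmin_r _ _)) as Hcompl.
    assert (Hscaled : exp (- eps) * (1 - u - delta) <= 1 - v) by lra.
    apply Hscale in Hscaled. split; lra.
  - intros [Hlin Hcompl]. apply Rmin_glb; [lra|]. apply Rmin_glb; [lra|].
    assert (exp (- eps) * (1 - u - delta) <= 1 - v) by (apply Hscale; lra). lra.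
Qed.

Lemma DP_tests_succ_le n eps delta phi x :
  DP_tests n eps delta phi -> (x < n)%nat ->
  phi (S x) <= dp_next (exp (- eps)) delta (phi x).
Proof.
  intros [Htest Hdp] Hx. destruct (Hdp x Hx) as (_ & D2 & D3 & _).
  apply dp_next_spec; [apply Htest; lia | tauto].
Qed.

Lemma DP_tests_of_monotone n eps delta phi : 0 < eps -> 0 <= delta ->
  is_test n phi ->
  (forall x, (x < n)%nat -> phi x <= phi (S x) <= dp_next (exp (- eps)) delta (phi x)) ->
  DP_tests n eps delta phi.
Proof.
  intros Heps Hdelta Htest Hstep. split; [exact Htest|].
  intros x Hx. destruct (Hstep x Hx) as [Hmono Hnext].
  assert (He : 1 <= exp eps) by (rewrite <- exp_0; left; apply exp_increasing; lra).
  pose proof (Htest x ltac:(lia)). pose proof (Htest (S x) ltac:(lia)).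
  apply dp_next_spec in Hnext; [|lra].
  repeat split; try tauto; nra.
Qed.

Lemma nearest_spec t : IZR (nearest t) - 1/2 <= t <= IZR (nearest t) + 1/2.
Proof.
  unfold nearest. pose proof (base_Int_part t) as [H1 H2].
  destruct (Rlt_dec _ _); [lra|].
  destruct (Rlt_dec _ _); [rewrite plus_IZR; lra|].
  destruct (Z.even _); [lra | rewrite plus_IZR; lra].
Qed.

Lemma IZR_dist_le1 k j : -1 <= IZR k - IZR j <= 1 ->
  k = j \/ k = (j + 1)%Z \/ j = (k + 1)%Z.
Proof.
  intros [H1 H2]. rewrite <- minus_IZR in H1, H2.
  apply le_IZR in H1. apply le_IZR in H2. lia.
Qed.

Lemma nearest0 : nearest 0 = 0%Z.
Proof.
  pose proof (nearest_spec 0) as H.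
  assert (IZR (nearest 0) < IZR 1) by (simpl; lra).
  assert (IZR (-1) < IZR (nearest 0)) by (simpl; lra).
  apply lt_IZR in H0. apply lt_IZR in H1. lia.
Qed.

Section tulap.

Variable b : R.
Hypothesis b_pos : 0 < b.
Hypothesis b_lt1 : b < 1.

(* The branch x <= [m] of the Tulap(0, b, 0) cdf, with the nearest integer [t]
   replaced by any integer r with |t - r| <= 1/2. *)
Definition tulap_tail (t r : R) : R :=
  Rpower b (- r) / (1 + b) * (b + (t - r + 1/2) * (1 - b)).

Lemma Rpower_opp_succ r : Rpower b (- (r + 1)) = Rpower b (- r) / b.
Proof.
  replace (- (r + 1)) with (- r + - (1)) by ring.
  rewrite Rpower_plus, (Rpower_Ropp b 1), Rpower_1 by lra. reflexivity.
Qed.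

Lemma tulap_tail_succ t r : tulap_tail (t + 1) (r + 1) = tulap_tail t r / b.
Proof. unfold tulap_tail. rewrite Rpower_opp_succ. field. lra. Qed.

Lemma tulap_tail_pred t r : tulap_tail (t - 1) (r - 1) = b * tulap_tail t r.
Proof.
  replace (tulap_tail t r) with (tulap_tail (t - 1 + 1) (r - 1 + 1)) by (f_equal; ring).
  rewrite tulap_tail_succ. field. lra.
Qed.

Lemma tulap_tail_midpoint r : tulap_tail (r + 1/2) (r + 1) = tulap_tail (r + 1/2) r.
Proof. unfold tulap_tail. rewrite Rpower_opp_succ. field. lra. Qed.

Lemma tulap_tail_indep t k j :
  IZR k - 1/2 <= t <= IZR k + 1/2 -> IZR j - 1/2 <= t <= IZR j + 1/2 ->
  tulap_tail t (IZR k) = tulap_tail t (IZR j).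
Proof.
  intros Hk Hj. destruct (IZR_dist_le1 k j) as [->|[->| ->]]; [lra | reflexivity | |].
  - rewrite plus_IZR in *. replace t with (IZR j + 1/2) by lra.
    apply tulap_tail_midpoint.
  - rewrite plus_IZR in *. replace t with (IZR k + 1/2) by lra.
    symmetry. apply tulap_tail_midpoint.
Qed.

Lemma tulap0_cdf_nonpos t k : t <= 0 -> IZR k - 1/2 <= t <= IZR k + 1/2 ->
  tulap0_cdf 0 b t = tulap_tail t (IZR k).
Proof.
  intros Ht Hk. unfold tulap0_cdf. rewrite nearest0. simpl IZR.
  destruct (Rle_dec t 0); [|lra]. rewrite Rminus_0_r.
  apply (tulap_tail_indep t (nearest t) k (nearest_spec t) Hk).
Qed.

Lemma tulap0_cdf_pos t k : 0 < t -> IZR k - 1/2 <= - t <= IZR k + 1/2 ->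
  tulap0_cdf 0 b t = 1 - tulap_tail (- t) (IZR k).
Proof.
  intros Ht Hk. unfold tulap0_cdf. rewrite nearest0. simpl IZR.
  destruct (Rle_dec t 0); [lra|]. rewrite Rminus_0_r.
  pose proof (nearest_spec t) as Hn.
  rewrite <- (tulap_tail_indep (- t) (- nearest t) k) by (rewrite ?opp_IZR; lra).
  unfold tulap_tail. rewrite opp_IZR, Ropp_involutive. f_equal. f_equal. f_equal. ring.
Qed.

Lemma Rpower_le1 s : 0 <= s -> Rpower b s <= 1.
Proof.
  intros Hs. unfold Rpower. rewrite <- exp_0.
  assert (ln b < 0) by (rewrite <- ln_1; apply ln_increasing; lra).
  destruct (Req_dec s 0) as [->|Hs0].
  - rewrite Rmult_0_l. lra.
  - left. apply exp_increasing. nra.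
Qed.

Lemma Rpower_le_base s : 1 <= s -> Rpower b s <= b.
Proof.
  intros Hs. replace s with (s - 1 + 1) by ring.
  rewrite Rpower_plus, Rpower_1 by lra.
  pose proof (Rpower_le1 (s - 1) ltac:(lra)).
  assert (0 < Rpower b (s - 1)) by apply exp_pos. nra.
Qed.

Lemma tulap_tail_bounds t r : r - 1/2 <= t <= r + 1/2 ->
  b * Rpower b (- r) / (1 + b) <= tulap_tail t r <= Rpower b (- r) / (1 + b).
Proof.
  intros Ht. unfold tulap_tail.
  assert (0 < Rpower b (- r) / (1 + b)) by (apply Rdiv_lt_0_compat; [apply exp_pos | lra]).
  replace (b * Rpower b (- r) / (1 + b)) with (Rpower b (- r) / (1 + b) * b) by (field; lra).
  split; [|rewrite <- (Rmult_1_r (Rpower b (- r) / (1 + b))) at 2];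
    apply Rmult_le_compat_l; nra.
Qed.

Lemma tulap_tail_le_ratio t r : r - 1/2 <= t <= r + 1/2 -> r <= -1 ->
  tulap_tail t r <= b / (1 + b).
Proof.
  intros Ht Hr. apply Rle_trans with (Rpower b (- r) / (1 + b)); [apply tulap_tail_bounds, Ht|].
  apply Rmult_le_compat_r; [left; apply Rinv_0_lt_compat; lra|].
  apply Rpower_le_base. lra.
Qed.

Lemma tulap_tail_le_inv t r : r - 1/2 <= t <= r + 1/2 -> r <= 0 ->
  tulap_tail t r <= 1 / (1 + b).
Proof.
  intros Ht Hr. apply Rle_trans with (Rpower b (- r) / (1 + b)); [apply tulap_tail_bounds, Ht|].
  apply Rmult_le_compat_r; [left; apply Rinv_0_lt_compat; lra|].
  apply Rpower_le1. lra.
Qed.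

Lemma tulap0_cdf_succ_lower t : t <= -1/2 ->
  tulap0_cdf 0 b t <= b / (1 + b) /\ tulap0_cdf 0 b (t + 1) = tulap0_cdf 0 b t / b.
Proof.
  intros Ht. destruct (Rle_dec t (-1)) as [Ht1|Ht1].
  - pose proof (nearest_spec t) as Hn.
    assert (Hk : IZR (nearest t) <= -1).
    { assert (nearest t < 0)%Z by (apply lt_IZR; simpl; lra).
      apply (IZR_le _ (-1)). lia. }
    rewrite (tulap0_cdf_nonpos t (nearest t)), (tulap0_cdf_nonpos (t + 1) (nearest t + 1)),
      plus_IZR, tulap_tail_succ by (rewrite ?plus_IZR; lra).
    split; [apply tulap_tail_le_ratio|]; lra.
  - rewrite (tulap0_cdf_nonpos t (-1)), (tulap0_cdf_pos (t + 1) 0) by (simpl; lra).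
    split; [apply tulap_tail_le_ratio; simpl; lra|].
    unfold tulap_tail.
    replace (- IZR (-1)) with 1 by (simpl; lra). replace (- IZR 0) with 0 by (simpl; lra).
    rewrite Rpower_O, Rpower_1 by lra. simpl IZR. field. lra.
Qed.

Lemma tulap0_cdf_succ_upper t : -1/2 < t ->
  b / (1 + b) <= tulap0_cdf 0 b t /\
  tulap0_cdf 0 b (t + 1) = 1 - b * (1 - tulap0_cdf 0 b t).
Proof.
  intros Ht. destruct (Rle_dec t 0) as [Ht0|Ht0].
  - rewrite (tulap0_cdf_nonpos t 0), (tulap0_cdf_pos (t + 1) (-1)) by (simpl; lra).
    split.
    + pose proof (tulap_tail_bounds t 0 ltac:(lra)) as [Hlow _].
      rewrite Ropp_0, Rpower_O, Rmult_1_r in Hlow by lra. exact Hlow.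
    + unfold tulap_tail.
      replace (- IZR (-1)) with 1 by (simpl; lra). replace (- IZR 0) with 0 by (simpl; lra).
      rewrite Rpower_O, Rpower_1 by lra. simpl IZR. field. lra.
  - pose proof (nearest_spec (- t)) as Hn.
    assert (Hk : IZR (nearest (- t)) <= 0).
    { assert (nearest (- t) < 1)%Z by (apply lt_IZR; simpl; lra).
      apply (IZR_le _ 0). lia. }
    rewrite (tulap0_cdf_pos t (nearest (- t))), (tulap0_cdf_pos (t + 1) (nearest (- t) - 1))
      by (rewrite ?minus_IZR; simpl; lra).
    rewrite minus_IZR. replace (- (t + 1)) with (- t - 1) by ring.
    rewrite tulap_tail_pred.
    split; [|ring].
    pose proof (tulap_tail_le_inv (- t) (IZR (nearest (- t))) ltac:(lra) Hk).
    replace (b / (1 + b)) with (1 - 1 / (1 + b)) by (field; lra). lra.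
Qed.

Lemma tulap0_cdf_succ t :
  tulap0_cdf 0 b (t + 1) = Rmin (tulap0_cdf 0 b t / b) (1 - b * (1 - tulap0_cdf 0 b t)).
Proof.
  set (F := tulap0_cdf 0 b t).
  assert (Hgap : 1 - b * (1 - F) - F / b = (1 - b) * (1 + b) / b * (b / (1 + b) - F))
    by (field; lra).
  assert (0 < (1 - b) * (1 + b) / b) by (apply Rdiv_lt_0_compat; nra).
  destruct (Rle_dec t (-1/2)) as [Ht|Ht].
  - destruct (tulap0_cdf_succ_lower t Ht) as [Hle ->].
    rewrite Rmin_left; [reflexivity|]. fold F in Hle |- *. nra.
  - destruct (tulap0_cdf_succ_upper t ltac:(lra)) as [Hge ->].
    rewrite Rmin_right; [reflexivity|]. fold F in Hge |- *. nra.
Qed.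

End tulap.

Lemma tulap_cdf_clamp b q t : 0 <= q < 1 ->
  tulap_cdf 0 b q t = clamp01 ((tulap0_cdf 0 b t - q / 2) / (1 - q)).
Proof.
  intros Hq. unfold tulap_cdf.
  set (F := tulap0_cdf 0 b t). set (w := (F - q / 2) / (1 - q)).
  assert (HF : F = q / 2 + w * (1 - q)) by (unfold w; field; lra).
  clearbody w. subst F.
  destruct (clamp01_cases w) as [[Hw ->]|[[Hw ->]|[Hw ->]]];
    repeat destruct Rle_dec; repeat destruct Rlt_dec; try nra.
Qed.

Lemma Rmin_affine_incr a c s k : 0 < k -> (Rmin a c - s) / k = Rmin ((a - s) / k) ((c - s) / k).
Proof.
  intros Hk. assert (0 < / k) by (apply Rinv_0_lt_compat; lra).
  destruct (Rle_dec a c) as [Hac|Hac].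
  - rewrite !Rmin_left; [reflexivity | | exact Hac].
    apply Rmult_le_compat_r; lra.
  - rewrite !Rmin_right; [reflexivity | | lra].
    apply Rmult_le_compat_r; lra.
Qed.

Definition tulap_q (b delta : R) : R := 2 * delta * b / (1 - b + 2 * delta * b).

Section tulap_test.

Variables b delta : R.
Hypothesis b_pos : 0 < b.
Hypothesis b_lt1 : b < 1.
Hypothesis delta_ge0 : 0 <= delta.

Let q := tulap_q b delta.
Let psi t := tulap_cdf 0 b q t.

Lemma tulap_q_range : 0 <= q < 1.
Proof.
  assert (HD : 0 < 1 - b + 2 * delta * b) by nra.
  unfold q, tulap_q. split.
  - apply Rmult_le_pos; [nra | left; apply Rinv_0_lt_compat; lra].
  - apply (Rmult_lt_reg_r (1 - b + 2 * delta * b)); [lra|]. unfold Rdiv.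
    rewrite Rmult_assoc, Rinv_l by lra. lra.
Qed.

Lemma tulap_cdf_succ_clamp t : exists w,
  psi t = clamp01 w /\ psi (t + 1) = Rmax 0 (dp_next b delta w).
Proof.
  pose proof tulap_q_range as Hq.
  assert (HD : 0 < 1 - b + 2 * delta * b) by nra.
  set (F := tulap0_cdf 0 b t).
  exists ((F - q / 2) / (1 - q)). unfold psi.
  rewrite !tulap_cdf_clamp, tulap0_cdf_succ by lra. fold F. split; [reflexivity|].
  rewrite Rmin_affine_incr by lra.
  unfold clamp01, dp_next. f_equal. f_equal. unfold q, tulap_q.
  f_equal; field; repeat split; lra.
Qed.

Lemma tulap_cdf_range t : 0 <= psi t <= 1.
Proof.
  destruct (tulap_cdf_succ_clamp t) as [w [-> _]].
  destruct (clamp01_cases w) as [[_ ->]|[[Hw ->]|[_ ->]]]; lra.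
Qed.

Lemma tulap_cdf_le_succ t : psi t <= psi (t + 1).
Proof.
  destruct (tulap_cdf_succ_clamp t) as [w [-> ->]].
  apply clamp01_le_dp_next; lra.
Qed.

Lemma tulap_cdf_succ_le t : psi (t + 1) <= dp_next b delta (psi t).
Proof.
  destruct (tulap_cdf_succ_clamp t) as [w [-> ->]].
  apply dp_next_le_clamp01; lra.
Qed.

Lemma tulap_cdf_succ_tight t : 0 < psi t -> psi (t + 1) = dp_next b delta (psi t).
Proof.
  destruct (tulap_cdf_succ_clamp t) as [w [-> ->]].
  apply dp_next_clamp01; lra.
Qed.

End tulap_test.

Lemma C_pos n k : 0 < C n k.
Proof.
  unfold C. apply Rdiv_lt_0_compat; [apply INR_fact_lt_0|].
  apply Rmult_lt_0_compat; apply INR_fact_lt_0.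
Qed.

Lemma binom_pmf_pos n theta x : 0 < theta < 1 -> 0 < binom_pmf n theta x.
Proof.
  intros Htheta. unfold binom_pmf. pose proof (C_pos n x).
  apply Rmult_lt_0_compat; [apply Rmult_lt_0_compat|]; try apply pow_lt; lra.
Qed.

Lemma binom_pmf_mlr n theta0 theta1 x y :
  0 < theta0 -> theta0 <= theta1 -> theta1 < 1 -> (x <= y <= n)%nat ->
  binom_pmf n theta1 x * binom_pmf n theta0 y <= binom_pmf n theta1 y * binom_pmf n theta0 x.
Proof.
  intros H0 H01 H1 [Hxy Hyn]. unfold binom_pmf.
  destruct (Nat.le_exists_sub x y Hxy) as [d [-> _]].
  replace (n - x)%nat with (n - (d + x) + d)%nat by lia.
  set (k := (n - (d + x))%nat). rewrite !pow_add.
  set (K := C n x * C n (d + x) * theta1 ^ x * theta0 ^ x * (1 - theta1) ^ k * (1 - theta0) ^ k).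
  assert (HK : 0 <= K).
  { pose proof (C_pos n x). pose proof (C_pos n (d + x)).
    assert (0 <= theta1 ^ x) by (apply pow_le; lra).
    assert (0 <= theta0 ^ x) by (apply pow_le; lra).
    assert (0 <= (1 - theta1) ^ k) by (apply pow_le; lra).
    assert (0 <= (1 - theta0) ^ k) by (apply pow_le; lra).
    unfold K. repeat (apply Rmult_le_pos; [|lra]); lra. }
  transitivity (K * (theta0 * (1 - theta1)) ^ d); [right; rewrite Rpow_mult_distr; unfold K; ring|].
  transitivity (K * (theta1 * (1 - theta0)) ^ d); [|right; rewrite Rpow_mult_distr; unfold K; ring].
  apply Rmult_le_compat_l; [exact HK|]. apply pow_incr. split; nra.
Qed.

Lemma power_sub n theta phi psi :
  power n theta phi - power n theta psi =
  sum_f_R0 (fun x => (phi x - psi x) * binom_pmf n theta x) n.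
Proof. unfold power. rewrite <- minus_sum. apply sum_eq. intros. ring. Qed.

Lemma sum_single_crossing_mlr n y (d p0 p1 : nat -> R) : (y <= n)%nat ->
  (forall x, (x <= n)%nat -> 0 < p0 x) -> 0 <= p1 y ->
  (forall x x', (x <= x' <= n)%nat -> p1 x * p0 x' <= p1 x' * p0 x) ->
  (forall x, (x < y)%nat -> 0 <= d x) ->
  (forall x, (y < x <= n)%nat -> d x <= 0) ->
  sum_f_R0 (fun x => d x * p0 x) n <= 0 ->
  sum_f_R0 (fun x => d x * p1 x) n <= 0.
Proof.
  intros Hyn Hp0 Hp1 Hmlr Hbefore Hafter Hsum0.
  pose proof (Hp0 y Hyn) as Hp0y.
  set (c := p1 y / p0 y).
  assert (Hc : 0 <= c) by (apply Rmult_le_pos; [lra | left; apply Rinv_0_lt_compat; lra]).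
  assert (Hterm : forall x, (x <= n)%nat -> d x * p1 x <= c * (d x * p0 x)).
  { intros x Hx. pose proof (Hp0 x Hx).
    destruct (lt_eq_lt_dec x y) as [[Hlt | ->] | Hgt].
    - assert (p1 x <= c * p0 x).
      { pose proof (Hmlr x y ltac:(lia)). apply (Rmult_le_reg_r (p0 y)); [lra|].
        unfold c. replace (p1 y / p0 y * p0 x * p0 y) with (p1 y * p0 x) by (field; lra).
        lra. }
      pose proof (Hbefore x Hlt). nra.
    - right. unfold c. field. lra.
    - assert (c * p0 x <= p1 x).
      { pose proof (Hmlr y x ltac:(lia)). apply (Rmult_le_reg_r (p0 y)); [lra|].
        unfold c. replace (p1 y / p0 y * p0 x * p0 y) with (p1 y * p0 x) by (field; lra).
        lra. }
      pose proof (Hafter x (conj Hgt Hx)). nra. }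
  apply Rle_trans with (sum_f_R0 (fun x => c * (d x * p0 x)) n); [apply sum_Rle, Hterm|].
  rewrite (sum_eq _ (fun x => d x * p0 x * c)) by (intros; ring).
  rewrite <- scal_sum. nra.
Qed.

Section most_powerful.

Variables (n : nat) (b delta : R) (psi phi : nat -> R).
Hypothesis b_pos : 0 < b.
Hypothesis b_le1 : b <= 1.
Hypothesis delta_ge0 : 0 <= delta.
Hypothesis psi_test : is_test n psi.
Hypothesis psi_tight :
  forall x, (x < n)%nat -> 0 < psi x -> psi (S x) = dp_next b delta (psi x).
Hypothesis phi_test : is_test n phi.
Hypothesis phi_dp : forall x, (x < n)%nat -> phi (S x) <= dp_next b delta (phi x).

Lemma below_tight_test_succ x : (x < n)%nat -> phi x <= psi x -> 0 < psi x ->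
  phi (S x) <= psi (S x) /\ 0 < psi (S x).
Proof.
  intros Hx Hle Hpos. rewrite psi_tight by assumption.
  split.
  - eapply Rle_trans; [apply phi_dp, Hx | apply dp_next_le_compat; assumption].
  - eapply Rlt_le_trans; [exact Hpos | apply dp_next_ge; try assumption; apply psi_test; lia].
Qed.

Lemma below_tight_test_stays x y : (x <= y <= n)%nat -> phi x <= psi x -> 0 < psi x ->
  phi y <= psi y.
Proof.
  intros [Hxy Hyn] Hle Hpos.
  enough (phi y <= psi y /\ 0 < psi y) by tauto.
  induction Hxy as [|y Hxy IH]; [tauto|].
  apply below_tight_test_succ; [lia | |]; apply IH; lia.
Qed.

Lemma tight_test_crossing : exists y, (y <= n)%nat /\
  (forall x, (x < y)%nat -> psi x <= phi x) /\ (forall x, (y < x <= n)%nat -> phi x <= psi x).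
Proof.
  set (P y := (y <= n)%nat /\ phi y <= psi y /\ 0 < psi y).
  assert (HnotP : forall x, (x <= n)%nat -> ~ P x -> psi x <= phi x).
  { intros x Hx HP. pose proof (phi_test x Hx).
    destruct (Rle_dec (psi x) (phi x)) as [|Hlt]; [assumption|].
    exfalso. apply HP. repeat split; [exact Hx | lra | lra]. }
  destruct (classic (exists y, P y)) as [Hex | Hnone].
  - destruct (Wf_nat.dec_inh_nat_subset_has_unique_least_element P (fun y => classic (P y)) Hex)
      as [y [[Py Hleast] _]].
    exists y. split; [apply Py|]. split.
    + intros x Hx. apply HnotP; [destruct Py; lia|].
      intros Px. specialize (Hleast x Px). lia.
    + intros x Hx. destruct Py as (_ & Hle & Hpos).
      apply (below_tight_test_stays y); [lia | exact Hle | exact Hpos].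
  - exists n. split; [lia|]. split; [|lia].
    intros x Hx. apply HnotP; [lia|]. intros Px. apply Hnone. exists x. exact Px.
Qed.

Lemma tight_test_most_powerful theta0 theta1 :
  0 < theta0 -> theta0 <= theta1 -> theta1 < 1 ->
  power n theta0 phi <= power n theta0 psi -> power n theta1 phi <= power n theta1 psi.
Proof.
  intros H0 H01 H1 Hlevel.
  destruct tight_test_crossing as (y & Hyn & Hbefore & Hafter).
  enough (power n theta1 phi - power n theta1 psi <= 0) by lra.
  rewrite power_sub.
  apply (sum_single_crossing_mlr n y _ (binom_pmf n theta0)); try assumption.
  - intros x _. apply binom_pmf_pos. lra.
  - left. apply binom_pmf_pos. lra.
  - intros x x' Hx. apply binom_pmf_mlr; assumption.
  - intros x Hx. specialize (Hbefore x Hx). lra.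
  - intros x Hx. specialize (Hafter x Hx). lra.
  - rewrite <- power_sub. lra.
Qed.

End most_powerful.

Theorem theorem4 (eps delta alpha theta0 theta1 : R) (n : nat) (m : R) :
  0 < eps -> 0 <= delta -> 0 < alpha < 1 ->
  0 < theta0 -> theta0 < theta1 -> theta1 < 1 -> (1 <= n)%nat ->
  let b := exp (- eps) in
  let q := 2 * delta * b / (1 - b + 2 * delta * b) in
  let phistar := fun x : nat => tulap_cdf 0 b q (INR x - m) in
  power n theta0 phistar = alpha ->
  UMP_simple n (DP_tests n eps delta) alpha theta0 theta1 phistar.
Proof.
  intros Heps Hdelta _ Htheta0 Htheta01 Htheta1 _ b q phistar Hsize.
  assert (Hb0 : 0 < b) by apply exp_pos.
  assert (Hb1 : b < 1) by (rewrite <- exp_0; apply exp_increasing; lra).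
  assert (Hshift : forall x, phistar (S x) = tulap_cdf 0 b (tulap_q b delta) (INR x - m + 1)).
  { intros x. unfold phistar. rewrite S_INR. f_equal. ring. }
  assert (Htest : is_test n phistar) by (intros x _; apply tulap_cdf_range; lra).
  split; [|split; [lra|]].
  - apply DP_tests_of_monotone; try assumption.
    intros x _. rewrite Hshift.
    split; [apply tulap_cdf_le_succ | apply tulap_cdf_succ_le]; assumption.
  - intros phi Hphi Hlevel.
    apply (tight_test_most_powerful n b delta) with (theta0 := theta0);
      try (assumption || lra).
    + intros x _ Hpos. rewrite Hshift. apply tulap_cdf_succ_tight; assumption || lra.
    + apply Hphi.
    + intros x Hx. apply (DP_tests_succ_le n eps); assumption.
Qed.
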